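(* Let $(A,\circ,-)$ be a minus-algebra, let $a,b\in A$ with $a\not\le b$, and let $F$ be a maximally $(a,b)$-separating filter of $(A,\circ)$. Then $F$ is prime: whenever $x\in F$ and $y\in A$, either $y\in F$ or $x-y\in F$.
   Context: A minus-algebra $(A,\circ,-)$ satisfies: $x\circ y=y-(y-x)$; $(A,\circ)$ is a right normal band (semigroup with $x\circ x=x$, $(x\circ y)\circ z=(y\circ x)\circ z$); there is an element $0$ with $x-x=0$ for all $x$; $x\circ0=0\circ x=0$; $(x-y)\circ x=x-y$; $(x-y)\circ y=0$; $(x-y)\circ z=(x\circ z)-y$; and $s-x=t-x\ \&\ x\circ s=x\circ t\Rightarrow s=t$. On $(A,\circ)$: $f\lesssim g$ iff $g\circ f=f$; $f\le g$ iff $f=f\circ g$. A filter is a non-empty $F\subseteq A$ closed under $\circ$ with $a\in F$, $a\lesssim b\Rightarrow b\in F$. For $a\not\le b$, a filter $F$ is $(a,b)$-separating if $a\in F$ and there is no $e\in F$ with $e\circ a=e\circ b$; it is maximally $(a,b)$-separating if it is maximal under inclusion among $(a,b)$-separating filters. *)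

Record MinusAlgebra := {
  carrier :> Type;
  comp : carrier -> carrier -> carrier;
  minus : carrier -> carrier -> carrier;
  zero : carrier;
  comp_def : forall x y, comp x y = minus y (minus y x);
  comp_assoc : forall x y z, comp (comp x y) z = comp x (comp y z);
  comp_idem : forall x, comp x x = x;
  comp_rnormal : forall x y z, comp (comp x y) z = comp (comp y x) z;
  minus_self : forall x, minus x x = zero;
  comp_zero_r : forall x, comp x zero = zero;
  comp_zero_l : forall x, comp zero x = zero;
  ax_minus_comp_l : forall x y, comp (minus x y) x = minus x y;
  ax_minus_comp_r : forall x y, comp (minus x y) y = zero;
  ax_minus_comp_z : forall x y z, comp (minus x y) z = minus (comp x z) y;
  ax_cancel : forall s t x,
      minus s x = minus t x -> comp x s = comp x t -> s = t
}.

Section Defs.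
Variable A : MinusAlgebra.

Definition lesssim (f g : A) : Prop := comp A g f = f.
Definition leA (f g : A) : Prop := f = comp A f g.

Definition is_filter (F : A -> Prop) : Prop :=
  (exists x, F x) /\
  (forall x y, F x -> F y -> F (comp A x y)) /\
  (forall x y, F x -> lesssim x y -> F y).

Definition separating (a b : A) (F : A -> Prop) : Prop :=
  is_filter F /\ F a /\ ~ (exists e, F e /\ comp A e a = comp A e b).

Definition max_separating (a b : A) (F : A -> Prop) : Prop :=
  separating a b F /\
  forall G : A -> Prop, separating a b G -> (forall x, F x -> G x) ->
    forall x, G x -> F x.

End Defs.

From Stdlib Require Import Classical.

(* Suppose x ∈ F but y ∉ F and x - y ∉ F.  By maximality, adjoining y (resp.
   x - y) to F yields a filter that is no longer separating, which gives
   f1, f2 ∈ F with f1∘y∘a = f1∘y∘b and f2∘(x-y)∘a = f2∘(x-y)∘b.  An element s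
   is determined by s - y and y∘s (the cancellation axiom), and
   (x∘s) - y = (x-y)∘s; hence e = x∘f1∘f2 ∈ F already satisfies e∘a = e∘b,
   contradicting that F is separating. *)

Section MinusAlgebraFilters.
Variable A : MinusAlgebra.

Local Infix "∘" := (comp A) (at level 40, left associativity).
Local Infix "-" := (minus A).

Lemma compCA (u v w : A) : u ∘ (v ∘ w) = v ∘ (u ∘ w).
Proof. rewrite <- !comp_assoc. apply comp_rnormal. Qed.

Lemma comp_idem_factor_r (f g z : A) : f ∘ z ∘ (g ∘ z) = f ∘ g ∘ z.
Proof. rewrite !comp_assoc, (compCA z g), comp_idem. reflexivity. Qed.

Lemma lesssim_comp_l (g z : A) : lesssim A (g ∘ z) g.
Proof. unfold lesssim. rewrite <- comp_assoc, comp_idem. reflexivity. Qed.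

Lemma lesssim_comp_r (f z : A) : lesssim A (f ∘ z) z.
Proof. unfold lesssim. rewrite compCA, comp_idem. reflexivity. Qed.

Lemma lesssim_trans (u g h : A) : lesssim A u g -> lesssim A g h -> lesssim A u h.
Proof.
  unfold lesssim. intros Hug Hgh.
  rewrite <- Hug, <- comp_assoc, Hgh. reflexivity.
Qed.

Lemma lesssim_comp (u v g h : A) :
  lesssim A u g -> lesssim A v h -> lesssim A (u ∘ v) (g ∘ h).
Proof.
  unfold lesssim. intros Hu Hv.
  rewrite comp_assoc, (compCA h u), Hv, <- comp_assoc, Hu. reflexivity.
Qed.

Lemma lesssim_comp_eq (u e a b : A) :
  lesssim A u e -> e ∘ a = e ∘ b -> u ∘ a = u ∘ b.
Proof.
  unfold lesssim. intros Hu He.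
  rewrite <- Hu, !comp_assoc, !(compCA e u), He. reflexivity.
Qed.

Lemma comp_eq_by_minus (x y s t : A) :
  (x - y) ∘ s = (x - y) ∘ t -> y ∘ s = y ∘ t -> x ∘ s = x ∘ t.
Proof.
  intros Hd Hy. apply (ax_cancel A _ _ y).
  - rewrite <- !ax_minus_comp_z. exact Hd.
  - rewrite !(compCA y x), Hy. reflexivity.
Qed.

Lemma comp_eq_by_minus_factors (x y u v a b : A) :
  u ∘ y ∘ a = u ∘ y ∘ b -> v ∘ (x - y) ∘ a = v ∘ (x - y) ∘ b ->
  x ∘ (u ∘ v) ∘ a = x ∘ (u ∘ v) ∘ b.
Proof.
  rewrite !comp_assoc. intros Hy Hd. apply comp_eq_by_minus with y.
  - rewrite !(compCA (x - y) u), !(compCA (x - y) v), Hd. reflexivity.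
  - rewrite !(compCA y u), !(compCA y v), !(compCA u v), Hy. reflexivity.
Qed.

Definition filter_adjoin (F : A -> Prop) (z : A) : A -> Prop :=
  fun g => exists f, F f /\ lesssim A (f ∘ z) g.

Lemma filter_adjoin_sub (F : A -> Prop) (z g : A) : F g -> filter_adjoin F z g.
Proof. intro Fg. exists g. split; [exact Fg | apply lesssim_comp_l]. Qed.

Lemma filter_adjoin_mem (F : A -> Prop) (z a : A) : F a -> filter_adjoin F z z.
Proof. intro Fa. exists a. split; [exact Fa | apply lesssim_comp_r]. Qed.

Lemma is_filter_adjoin (F : A -> Prop) (z : A) :
  is_filter A F -> is_filter A (filter_adjoin F z).
Proof.
  intros [[x Fx] [Fcomp Fup]]. split; [|split].
  - exists x. apply filter_adjoin_sub, Fx.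
  - intros g h [f1 [F1 H1]] [f2 [F2 H2]].
    exists (f1 ∘ f2). split; [apply Fcomp; assumption|].
    rewrite <- comp_idem_factor_r. apply lesssim_comp; assumption.
  - intros g h [f [Ff Hg]] Hgh.
    exists f. split; [exact Ff | apply lesssim_trans with g; assumption].
Qed.

Lemma max_separating_not_mem (a b : A) (F : A -> Prop) (z : A) :
  max_separating A a b F -> ~ F z ->
  exists f, F f /\ f ∘ z ∘ a = f ∘ z ∘ b.
Proof.
  intros [[HF [Fa Hsep]] Hmax] Nz.
  destruct (classic (exists e, filter_adjoin F z e /\ e ∘ a = e ∘ b))
    as [[e [[f [Ff Hfe]] He]] | Hsep_adjoin].
  - exists f. split; [exact Ff | exact (lesssim_comp_eq _ _ _ _ Hfe He)].
  - exfalso. apply Nz, (Hmax (filter_adjoin F z)).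
    + split; [apply is_filter_adjoin, HF|].
      split; [apply filter_adjoin_sub, Fa | exact Hsep_adjoin].
    + intros g Fg. apply filter_adjoin_sub, Fg.
    + apply filter_adjoin_mem with a, Fa.
Qed.

End MinusAlgebraFilters.

Theorem lemma3p11 (A : MinusAlgebra) (a b : A) (F : A -> Prop) :
  ~ leA A a b ->
  max_separating A a b F ->
  forall x y : A, F x -> F y \/ F (minus A x y).
Proof.
  (* [~ leA A a b] only ensures that separating filters exist. *)
  intros _ Hmax x y Fx.
  destruct (classic (F y)) as [Fy | Ny]; [left; exact Fy | right].
  apply NNPP. intro Nd.
  destruct (max_separating_not_mem A a b F y Hmax Ny) as [f1 [F1 H1]].
  destruct (max_separating_not_mem A a b F _ Hmax Nd) as [f2 [F2 H2]].
  destruct Hmax as [[[_ [Fcomp _]] [_ Hsep]] _].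
  apply Hsep. exists (comp A x (comp A f1 f2)). split.
  - apply Fcomp; [exact Fx | apply Fcomp; assumption].
  - exact (comp_eq_by_minus_factors A x y f1 f2 a b H1 H2).
Qed.
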